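(* Let $m\geq 1$ and let $f=a_0+a_1z+\cdots+a_mz^m\in\mathbb{Z}[z]$ with $a_m\neq 0$. Suppose there exist a prime $p$ and coprime positive integers $k$ and $j$ with $1\leq j\leq m$ such that $p\nmid a_j$, $p^k\mid a_i$ for all $i=0,\ldots,j-1$, and $p^{k+1}\nmid a_0$. Then for every factorization $f=gh$ with $g,h\in\mathbb{Z}[z]$ one has $\min\{\deg g,\deg h\}\leq m-j$ (more precisely, one of $g,h$ has degree $0$ or degree at most $m-j$). In particular, if $f$ is primitive and $j=m$, then $f$ is irreducible in $\mathbb{Z}[z]$; and if $f$ is primitive, $j=m-1$, and $f$ has no root in $\mathbb{Q}$, then $f$ is irreducible in $\mathbb{Z}[z]$.
   Context: A polynomial in $\mathbb{Z}[z]$ is primitive if the greatest common divisor of its coefficients is $1$. *)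

From HB Require Import structures.
From mathcomp Require Import all_boot all_order all_algebra.
Set Implicit Arguments. Unset Strict Implicit. Unset Printing Implicit Defensive.
Import Order.TTheory GRing.Theory Num.Theory.
Local Open Scope ring_scope.

Definition primitive_poly (f : {poly int}) : Prop :=
  \big[gcdn/0%N]_(i < size f) absz (f`_i) = 1%N.

Definition irreducible_Zpoly (f : {poly int}) : Prop :=
  [/\ f != 0, f \isn't a GRing.unit &
      forall g h : {poly int}, f = g * h -> g \is a GRing.unit \/ h \is a GRing.unit].

From HB Require Import structures.
From mathcomp Require Import all_boot all_order all_algebra.
From mathcomp Require Import zify.
Import Order.TTheory GRing.Theory Num.Theory.
Local Open Scope ring_scope.

(* Newton polygons.  Weight the coefficient [a_i] of a polynomial over [Z] by
   [j v_p(a_i) + k i] and let [r] be the largest index of minimal weight.  Since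
   [v_p] is additive and ultrametric, under multiplication the minimal weights
   add up and so do these indices.  For [f] the minimal weight [j k] is attained
   at [0] and last at [j], so [r + s = j] whenever [f = g h].  As
   [v_p(g_0 h_0) = v_p(f_0) = k], the minimum for [g] is attained at [0] too,
   whence [j v_p(g_0) = j v_p(g_r) + k r]; since [k] and [j] are coprime, [j]
   divides [r].  Hence [r = j] or [s = j], and one factor has degree at least [j]. *)

Lemma coef_neq0_lt_size (R : nzSemiRingType) (g : {poly R}) i :
  g`_i != 0 -> (i < size g)%N.
Proof. by rewrite ltnNge; apply: contra => /(nth_default 0)->. Qed.

Arguments coef_neq0_lt_size {R g i}.

Section Valuation.
Variable p : nat.
Hypothesis p_pr : prime p.

Definition pval (x : int) : nat := logn p `|x|.

Lemma dvdz_pexp_pval (x : int) e :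
  x != 0 -> ((p ^ e)%N%:Z %| x)%Z = (e <= pval x)%N.
Proof. by move=> x0; rewrite dvdzE absz_nat pfactor_dvdn // absz_gt0. Qed.

Lemma pvalM (x y : int) : x != 0 -> y != 0 -> pval (x * y) = (pval x + pval y)%N.
Proof. by move=> x0 y0; rewrite /pval abszM lognM // absz_gt0. Qed.

Lemma pdvdz_sum (I : finType) (P : pred I) (F : I -> int) e :
  (forall i, P i -> F i != 0 -> (e < pval (F i))%N) ->
  ((p ^ e.+1)%N%:Z %| \sum_(i | P i) F i)%Z.
Proof.
move=> F_gt; apply: rpred_sum => i Pi.
have [->|Fi0] := eqVneq (F i) 0; first exact: dvdz0.
by rewrite dvdz_pexp_pval // F_gt.
Qed.

Lemma pval_addr (x y : int) :
  x != 0 -> ((p ^ (pval x).+1)%N%:Z %| y)%Z -> x + y != 0 /\ pval (x + y) = pval x.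
Proof.
move=> x0 dvd_y.
have ndvd_xy : ~~ ((p ^ (pval x).+1)%N%:Z %| x + y)%Z.
  by rewrite (rpredDr _ dvd_y) dvdz_pexp_pval // ltnn.
have xy0 : x + y != 0 by apply: contraNneq ndvd_xy => ->; rewrite dvdz0.
split=> //; apply/eqP; rewrite eqn_leq leqNgt -dvdz_pexp_pval // ndvd_xy /=.
rewrite -dvdz_pexp_pval // rpredD //; first by rewrite dvdz_pexp_pval.
by apply: dvdz_trans dvd_y; rewrite dvdzE !absz_nat dvdn_exp2l.
Qed.

End Valuation.

Section Weight.
Variables p a b : nat.
Hypotheses (p_pr : prime p) (a_gt0 : (0 < a)%N).

Definition weight (g : {poly int}) (i : nat) : nat := (a * pval p g`_i + b * i)%N.

(* [r] is the right end of the edge of slope [-b/a] of the Newton polygon of [g]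
   (with respect to [p]), and [mu / a] is where the supporting line meets the axis. *)
Definition last_min_weight (g : {poly int}) (mu r : nat) : Prop :=
  [/\ g`_r != 0, weight g r = mu,
      forall i, g`_i != 0 -> (mu <= weight g i)%N &
      forall i, g`_i != 0 -> (r < i)%N -> (mu < weight g i)%N].

Lemma weight_term (g h : {poly int}) n i :
  (i <= n)%N -> g`_i != 0 -> h`_(n - i) != 0 ->
  (a * pval p (g`_i * h`_(n - i)) + b * n)%N = (weight g i + weight h (n - i))%N.
Proof.
move=> le_in gi0 hni0; rewrite pvalM // /weight.
have -> : (b * n = b * i + b * (n - i))%N by rewrite -mulnDr subnKC.
lia.
Qed.

Lemma weight_coefM_ge (g h : {poly int}) n c :
  (g * h)`_n != 0 ->
  (forall i, (i <= n)%N -> g`_i != 0 -> h`_(n - i) != 0 ->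
     (c <= weight g i + weight h (n - i))%N) ->
  (c <= weight (g * h) n)%N.
Proof.
move=> ghn0 terms_ge; rewrite leqNgt; apply/negP => lt_c.
suff : ((p ^ (pval p (g * h)`_n).+1)%N%:Z %| (g * h)`_n)%Z.
  by rewrite dvdz_pexp_pval // ltnn.
rewrite [X in (_ %| X)%Z]coefM; apply: (@pdvdz_sum _ _ _ xpredT) => // i _.
rewrite mulf_eq0 negb_or => /andP [gi0 hni0].
have le_in : (i <= n)%N by rewrite -ltnS.
rewrite -(ltn_pmul2l a_gt0) -(ltn_add2r (b * n)) weight_term //.
by apply: leq_trans (terms_ge _ le_in gi0 hni0); move: lt_c; rewrite /weight.
Qed.

Lemma last_min_weight_exists (g : {poly int}) :
  g != 0 -> exists mu r, last_min_weight g mu r.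
Proof.
move=> g0.
pose attained w := [exists i : 'I_(size g), (g`_i != 0) && (weight g i == w)].
have ex_attained : exists w, attained w.
  have lt_sz : ((size g).-1 < size g)%N by rewrite prednK // size_poly_gt0.
  exists (weight g (size g).-1); apply/existsP; exists (Ordinal lt_sz) => /=.
  by rewrite eqxx andbT -lead_coefE lead_coef_eq0.
have attainedP i : g`_i != 0 -> attained (weight g i).
  move=> gi0; apply/existsP; exists (Ordinal (coef_neq0_lt_size gi0)).
  by rewrite /= gi0 eqxx.
case: (ex_minnP ex_attained) => mu /existsP [i0 /andP [gi00 /eqP wi0]] mu_min.
pose at_min i := (g`_i != 0) && (weight g i == mu).
have ex_at_min : exists i, at_min i by exists i0; rewrite /at_min gi00 wi0 eqxx.
have ub_at_min i : at_min i -> (i <= size g)%N.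
  by case/andP => /coef_neq0_lt_size/ltnW.
case: (ex_maxnP ex_at_min ub_at_min) => r /andP [gr0 /eqP wr] r_max.
exists mu, r; split=> // [i gi0|i gi0 lt_ri]; first exact/mu_min/attainedP.
rewrite ltn_neqAle mu_min ?attainedP // andbT; apply/eqP => wi.
by have := r_max i; rewrite /at_min gi0 -wi eqxx leqNgt lt_ri => /(_ isT).
Qed.

Lemma last_min_weight_uniq (g : {poly int}) mu r mu' r' :
  last_min_weight g mu r -> last_min_weight g mu' r' -> mu = mu' /\ r = r'.
Proof.
move=> [gr0 wr min_r gt_r] [gr'0 wr' min_r' gt_r'].
have mu_eq : mu = mu' by apply/eqP; rewrite eqn_leq -{1}wr' min_r //= -wr min_r'.
split=> //; case: (ltngtP r r') => // [lt_rr'|lt_r'r].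
  by have := gt_r _ gr'0 lt_rr'; rewrite wr' mu_eq ltnn.
by have := gt_r' _ gr0 lt_r'r; rewrite wr mu_eq ltnn.
Qed.

Section Product.
Variables (g h : {poly int}) (mu1 r mu2 s : nat).
Hypotheses (g_min : last_min_weight g mu1 r) (h_min : last_min_weight h mu2 s).

Lemma weight_cross_gt n i : (i <= n)%N -> g`_i != 0 -> h`_(n - i) != 0 ->
  (r < i)%N || (s < n - i)%N -> (mu1 + mu2 < weight g i + weight h (n - i))%N.
Proof.
case: g_min h_min => [_ _ min_g gt_g] [_ _ min_h gt_h] le_in gi0 hni0.
case/orP => [lt_ri|lt_s].
  by rewrite -addSn leq_add ?gt_g ?min_h.
by rewrite -addnS leq_add ?min_g ?gt_h.
Qed.

Lemma last_min_weightM : last_min_weight (g * h) (mu1 + mu2) (r + s).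
Proof.
have [gr0 wr min_g _] := g_min; have [hs0 ws min_h _] := h_min.
have lt_r : (r < (r + s).+1)%N by rewrite ltnS leq_addr.
have le_r : (r <= r + s)%N by rewrite leq_addr.
have hs0' : h`_(r + s - r) != 0 by rewrite addKn.
set t := pval p (g`_r * h`_(r + s - r)).
have wt : (a * t + b * (r + s))%N = (mu1 + mu2)%N by rewrite weight_term // addKn wr ws.
have := coefM g h (r + s); rewrite (bigD1 (Ordinal lt_r)) //=.
set R := \sum_(i | _) _ => coef_rs.
have dvd_R : ((p ^ t.+1)%N%:Z %| R)%Z.
  apply: pdvdz_sum => // i ne_ir; rewrite mulf_eq0 negb_or => /andP [gi0 hi0].
  have le_i : (i <= r + s)%N by rewrite -ltnS.
  have cross : (r < i)%N || (s < r + s - i)%N.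
    have : (i : nat) != r by apply: contra ne_ir => eq_ir; apply/eqP/val_inj/eqP.
    by rewrite neq_ltn => /orP [lt_ir|->//]; apply/orP; right; lia.
  rewrite -(ltn_pmul2l a_gt0) -(ltn_add2r (b * (r + s))) wt weight_term //.
  exact: weight_cross_gt.
have [rs0 vrs] := pval_addr _ p_pr _ _ (mulf_neq0 gr0 hs0') dvd_R.
rewrite -coef_rs in rs0 vrs.
split=> // [|i gi0|i gi0 lt_i]; first by rewrite /weight vrs.
  apply: weight_coefM_ge => // l le_l gl0 hl0.
  by rewrite leq_add ?min_g ?min_h.
apply: weight_coefM_ge => // l le_l gl0 hl0.
apply: weight_cross_gt => //; case: (ltnP r l) => //= le_lr.
by move: lt_i le_lr; clear; lia.
Qed.

End Product.

Lemma weight_eq_coef0_dvd (g : {poly int}) r :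
  coprime a b -> weight g r = weight g 0 -> (a %| r)%N.
Proof.
move=> co_ab; rewrite {2}/weight muln0 addn0 => eq_w.
rewrite -(Gauss_dvdr _ co_ab).
have -> : (b * r = a * pval p g`_0 - a * pval p g`_r)%N by rewrite -eq_w addKn.
by rewrite dvdn_sub ?dvdn_mulr.
Qed.

End Weight.

Arguments last_min_weight_exists p a b {g}.
Arguments last_min_weight_uniq {p a b g mu r mu' r'}.
Arguments last_min_weightM {p a b} p_pr a_gt0 {g h mu1 r mu2 s}.
Arguments weight_eq_coef0_dvd {p a b g r}.

Section DumasCriterion.
Variables (p k j : nat) (f : {poly int}).
Hypotheses (p_pr : prime p) (k_gt0 : (0 < k)%N) (j_gt0 : (0 < j)%N).
Hypotheses (fj_ndvd : ~~ (p%:Z %| f`_j)%Z)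
  (fi_dvd : forall i, (i < j)%N -> ((p ^ k)%N%:Z %| f`_i)%Z)
  (f0_ndvd : ~~ ((p ^ k.+1)%N%:Z %| f`_0)%Z).

Local Notation weight := (weight p j k).

Lemma dumas_last_min_weight : last_min_weight p j k f (j * k) j.
Proof.
have fj0 : f`_j != 0 by apply: contraNneq fj_ndvd => ->; rewrite dvdz0.
have pval_fj : pval p f`_j = 0%N.
  by apply/eqP; rewrite -leqn0 leqNgt -(dvdz_pexp_pval _ p_pr _ 1) // expn1.
have wj : weight f j = (j * k)%N by rewrite /weight pval_fj; lia.
split=> // [i fi0|i fi0 lt_ji]; last first.
  have : (k * j < k * i)%N by rewrite ltn_pmul2l.
  by rewrite /weight; lia.
have [lt_ij|le_ji] := ltnP i j.
  have : (k <= pval p f`_i)%N by rewrite -dvdz_pexp_pval // fi_dvd.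
  by rewrite /weight; nia.
have : (k * j <= k * i)%N by rewrite leq_mul2l le_ji orbT.
by rewrite /weight; lia.
Qed.

Lemma dumas_pval_coef0 : f`_0 != 0 /\ pval p f`_0 = k.
Proof.
have f00 : f`_0 != 0 by apply: contraNneq f0_ndvd => ->; rewrite dvdz0.
split=> //; apply/eqP; rewrite eqn_leq -dvdz_pexp_pval // fi_dvd // andbT.
by rewrite leqNgt -dvdz_pexp_pval.
Qed.

Hypothesis co_kj : coprime k j.

Lemma dumas_factor_lt_size (g h : {poly int}) :
  f = g * h -> (j < size g)%N || (j < size h)%N.
Proof.
move=> f_gh.
have [f00 pval_f0] := dumas_pval_coef0.
have [g00 h00] : g`_0 != 0 /\ h`_0 != 0.
  by apply/andP; rewrite -negb_or -mulf_eq0 -coef0M -f_gh.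
have g0 : g != 0 by apply: contraNneq g00 => ->; rewrite coef0.
have h0 : h != 0 by apply: contraNneq h00 => ->; rewrite coef0.
have [mu1 [r g_min]] := last_min_weight_exists p j k g0.
have [mu2 [s h_min]] := last_min_weight_exists p j k h0.
have := last_min_weightM p_pr j_gt0 g_min h_min; rewrite -f_gh => f_min.
have [mu_eq rs_eq] := last_min_weight_uniq f_min dumas_last_min_weight.
have w0 : (weight g 0 + weight h 0 = j * k)%N.
  by rewrite /weight !muln0 !addn0 -mulnDr -pvalM // -coef0M -f_gh pval_f0.
have [gr0 wr min_g _] := g_min; have [hs0 _ min_h _] := h_min.
have := min_g _ g00; have := min_h _ h00 => le_mu2 le_mu1.
have wg0 : weight g 0 = mu1 by lia.
have co_jk : coprime j k by rewrite coprime_sym.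
have j_r : (j %| r)%N by apply: (weight_eq_coef0_dvd (p:=p) (g:=g) co_jk); rewrite wr.
have [r0|r_gt0] := posnP r.
  by apply/orP; right; rewrite -rs_eq r0 (coef_neq0_lt_size hs0).
have r_j : r = j by apply/eqP; rewrite eqn_leq -{1}rs_eq leq_addr dvdn_leq.
by rewrite -r_j (coef_neq0_lt_size gr0).
Qed.

Lemma dumas_factor_degree (m : nat) (g h : {poly int}) :
  size f = m.+1 -> f = g * h -> (minn (size g).-1 (size h).-1 <= m - j)%N.
Proof.
move=> size_f f_gh.
have f0 : f != 0 by rewrite -size_poly_gt0 size_f.
have : g * h != 0 by rewrite -f_gh.
rewrite mulf_eq0 negb_or => /andP [g0 h0].
have := size_mul g0 h0; rewrite -f_gh size_f.
have := size_poly_gt0 g; have := size_poly_gt0 h; rewrite g0 h0.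
have := dumas_factor_lt_size _ _ f_gh.
by move: (size g) (size h); lia.
Qed.

End DumasCriterion.

Arguments dumas_factor_degree {p k j f}.

Lemma absz_eq1_unit (c : int) : `|c|%N = 1%N -> c \is a GRing.unit.
Proof. by case: c => [[|[|n]]|[|n]]. Qed.

Lemma primitive_const_factor_unit (f g h : {poly int}) :
  primitive_poly f -> f = g * h -> (size g <= 1)%N -> g \is a GRing.unit.
Proof.
move=> prim_f f_gh size_g.
have g_const := size1_polyC size_g.
have coef_f n : f`_n = g`_0 * h`_n by rewrite f_gh {1}g_const coefCM.
have dvd_1 : dvdn `|g`_0| 1.
  by rewrite -prim_f; apply/dvdn_biggcdP => i _; rewrite coef_f abszM dvdn_mulr.
have abs_g0 : absz g`_0 = 1%N by apply/eqP; rewrite -dvdn1.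
have g00 : g`_0 != 0 by rewrite -absz_eq0 abs_g0.
by rewrite poly_unitE absz_eq1_unit // andbT g_const size_polyC g00.
Qed.

Lemma size_not_unit (f : {poly int}) : (1 < size f)%N -> f \isn't a GRing.unit.
Proof. by rewrite poly_unitE ltn_neqAle eq_sym => /andP [/negPf->]. Qed.

Lemma factor_size2_root (f g h : {poly int}) :
  f = g * h -> size g = 2%N -> exists x : rat, root (map_poly intr f) x.
Proof.
move=> f_gh size_g.
have size_gQ : size (map_poly intr g : {poly rat}) = 2%N.
  by rewrite size_map_inj_poly ?rmorph0 //; exact: intr_inj.
have [x gx] := poly2_root size_gQ.
by exists x; rewrite f_gh rmorphM rootM gx.
Qed.

Lemma primitive_irreducible (f : {poly int}) :
  (1 < size f)%N -> primitive_poly f ->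
  (forall g h, f = g * h -> (size g <= 1)%N || (size h <= 1)%N) ->
  irreducible_Zpoly f.
Proof.
move=> size_f prim_f factor_small; split=> [||g h f_gh].
- by rewrite -size_poly_gt0 ltnW.
- exact: size_not_unit.
case/orP: (factor_small g h f_gh) => [size_g|size_h].
  by left; apply: primitive_const_factor_unit prim_f f_gh size_g.
by right; apply: primitive_const_factor_unit prim_f (etrans f_gh (mulrC g h)) size_h.
Qed.

Theorem theorem1 (m : nat) (f : {poly int}) (p k j : nat) :
  (1 <= m)%N -> size f = m.+1 ->
  prime p -> (0 < k)%N -> (0 < j)%N -> coprime k j -> (j <= m)%N ->
  ~~ (p%:Z %| f`_j)%Z ->
  (forall i, (i < j)%N -> ((p ^ k)%N%:Z %| f`_i)%Z) ->
  ~~ ((p ^ k.+1)%N%:Z %| f`_0)%Z ->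
  [/\ (forall g h : {poly int}, f = g * h ->
         (minn (size g).-1 (size h).-1 <= m - j)%N),
      (primitive_poly f -> j = m -> irreducible_Zpoly f) &
      (primitive_poly f -> j = m.-1 ->
         (forall x : rat, ~~ root (map_poly intr f) x) -> irreducible_Zpoly f)].
Proof.
move=> m_gt0 size_f p_pr k_gt0 j_gt0 co_kj _ fj_ndvd fi_dvd f0_ndvd.
have degree_bound :=
  dumas_factor_degree p_pr k_gt0 j_gt0 fj_ndvd fi_dvd f0_ndvd co_kj m _ _ size_f.
have size_f_gt1 : (1 < size f)%N by rewrite size_f ltnS.
split=> // [prim_f j_m | prim_f j_m no_root];
  apply: primitive_irreducible => // g h f_gh; have := degree_bound _ _ f_gh.
  by rewrite j_m subnn; move: (size g) (size h); lia.
have size_neq2 (u v : {poly int}) : f = u * v -> size u != 2%N.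
  by move=> f_uv; apply/eqP => /(factor_size2_root _ _ _ f_uv) [x]; apply/negP.
have := size_neq2 _ _ f_gh; have := size_neq2 _ _ (etrans f_gh (mulrC g h)).
by rewrite j_m; move: (size g) (size h); lia.
Qed.
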